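(* Let $\alpha,\beta$ be propositional formulas. If $\alpha\mathbin{|\!\sim}_{ow}\beta$, then there is a formula $\gamma$ with $V(\gamma)\subseteq V(\alpha)\cap V(\beta)$ such that $\alpha\mathbin{|\!\sim}_{ow}\gamma$ and $\gamma\vdash\beta$ in $\mathbf{HT}$.
   Context: $V(\varphi)$ is the set of atoms of $\varphi$. Here-and-there logic $\mathbf{HT}(V)$ over atom set $V$: interpretations are pairs $\langle H,T\rangle$, $H\subseteq T\subseteq V$, viewed as two-world Kripke models ($h\le t$; atoms true at $h$: $H$, at $t$: $T$) with intuitionistic Kripke clauses, $\neg\varphi:=\varphi\to\bot$; $\mathcal M\models\varphi$ iff $\varphi$ true at both worlds; $\Pi\vdash\varphi$ iff every $\mathbf{HT}$-model of $\Pi$ is a model of $\varphi$. An equilibrium model of $\Pi$ over $V$ is a model $\langle T,T\rangle$ of $\Pi$ in $\mathbf{HT}(V)$ with no model $\langle H,T\rangle$ of $\Pi$ with $H\subsetneq T$; $E_V(\Pi)$ is the set of these. Open-world equilibrium entailment: if $\Pi$ is non-empty and has equilibrium models, $\Pi\mathbin{|\!\sim}_{ow}\varphi$ iff $\mathcal M\models\varphi$ for every $\mathbf{HT}(V(\Pi)\cup V(\varphi))$-interpretation $\mathcal M$ whose restriction to $V(\Pi)$ belongs to $E_{V(\Pi)}(\Pi)$ (i.e., atoms outside $V(\Pi)$ are interpreted arbitrarily, with $H\subseteq T$); otherwise $\Pi\mathbin{|\!\sim}_{ow}\varphi$ iff $\Pi\vdash\varphi$. A formula $\alpha$ is identified with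 $\{\alpha\}$. *)

From Stdlib Require Import List.
Import ListNotations.

Inductive form : Type :=
  | Atom : nat -> form
  | Bot : form
  | And : form -> form -> form
  | Or : form -> form -> form
  | Imp : form -> form -> form.

Definition Neg (f : form) : form := Imp f Bot.
Definition Top : form := Imp Bot Bot.

Fixpoint vars (f : form) : list nat :=
  match f with
  | Atom p => [p]
  | Bot => []
  | And a b | Or a b | Imp a b => vars a ++ vars b
  end.

Definition atoms := nat -> Prop.

Fixpoint sat_t (T : atoms) (f : form) : Prop :=
  match f with
  | Atom p => T p
  | Bot => False
  | And a b => sat_t T a /\ sat_t T b
  | Or a b => sat_t T a \/ sat_t T b
  | Imp a b => sat_t T a -> sat_t T b
  end.

(* Truth at the "here" world h of the Kripke model <H,T>, h <= t. *)
Fixpoint sat_h (H T : atoms) (f : form) : Prop :=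
  match f with
  | Atom p => H p
  | Bot => False
  | And a b => sat_h H T a /\ sat_h H T b
  | Or a b => sat_h H T a \/ sat_h H T b
  | Imp a b => (sat_h H T a -> sat_h H T b) /\ (sat_t T a -> sat_t T b)
  end.

Definition models (H T : atoms) (f : form) : Prop := sat_h H T f /\ sat_t T f.

Definition subset (A B : atoms) : Prop := forall p, A p -> B p.

(* Satisfaction only depends on atoms of the formulas, so quantifying over all
   interpretations over the full atom set nat is the same as quantifying over
   HT(V) for any V ⊇ V(a) ∪ V(f). *)
Definition entails (a f : form) : Prop :=
  forall H T : atoms, subset H T -> models H T a -> models H T f.

Definition eq_model (V : list nat) (a : form) (T : atoms) : Prop :=
  subset T (fun p => In p V) /\
  models T T a /\
  ~ (exists H : atoms, subset H T /\ (exists p, T p /\ ~ H p) /\ models H T a).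

Definition has_eq_model (a : form) : Prop := exists T, eq_model (vars a) a T.

Definition ow_entails (a f : form) : Prop :=
  (has_eq_model a ->
     forall H T : atoms,
       subset H T ->
       subset T (fun p => In p (vars a) \/ In p (vars f)) ->
       (* the restriction <H ∩ V(a), T ∩ V(a)> belongs to E_{V(a)}(a) *)
       (forall p, In p (vars a) -> (H p <-> T p)) ->
       eq_model (vars a) a (fun p => T p /\ In p (vars a)) ->
       models H T f) /\
  (~ has_eq_model a -> entails a f).

(* The interpolant is a formula over the shared atoms X := V(α) ∩ V(β) that
   defines the class of interpretations ⟨H,T⟩ such that every interpretation
   agreeing on X with ⟨H,T⟩, and every one agreeing on X with ⟨T,T⟩, is a
   model of β.  A class closed under X-agreement and under ⟨H,T⟩ ↦ ⟨T,T⟩ is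
   HT-definable over X, by a disjunction of characteristic formulas, so such a
   formula γ exists; γ ⊢ β is immediate.  For α |~ γ: an interpretation that
   agrees on X with a (equilibrium) model of α can be glued with that model
   along V(α) into an interpretation which α already forces to satisfy β, and
   β only sees the second half of the glued interpretation. *)
From Stdlib Require Import List Classical PeanoNat.
Import ListNotations.

Definition agree (A B : atoms) (l : list nat) : Prop :=
  forall p, In p l -> (A p <-> B p).

Lemma agree_incl A B l1 l2 : incl l1 l2 -> agree A B l2 -> agree A B l1.
Proof. intros hl h p hp; apply h, hl, hp. Qed.

Lemma agree_sym A B l : agree A B l -> agree B A l.
Proof. intros h p hp; symmetry; apply h, hp. Qed.

Lemma agree_trans A B C l : agree A B l -> agree B C l -> agree A C l.
Proof. intros h1 h2 p hp; rewrite (h1 p hp); apply h2, hp. Qed.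

Lemma sat_agree f : forall H T H' T',
  agree H H' (vars f) -> agree T T' (vars f) ->
  (sat_h H T f <-> sat_h H' T' f) /\ (sat_t T f <-> sat_t T' f).
Proof.
  induction f as [p| |f1 IH1 f2 IH2|f1 IH1 f2 IH2|f1 IH1 f2 IH2];
    intros H T H' T' hH hT; simpl in *.
  1: split; [apply hH | apply hT]; simpl; auto.
  1: tauto.
  all: destruct (IH1 H T H' T') as [e1 e2], (IH2 H T H' T') as [e3 e4];
    try (eapply agree_incl; [|eassumption]; auto using incl_appl, incl_appr, incl_refl);
    tauto.
Qed.

Lemma models_agree f H T H' T' :
  agree H H' (vars f) -> agree T T' (vars f) -> models H T f -> models H' T' f.
Proof. intros hH hT; destruct (sat_agree f H T H' T' hH hT); unfold models; tauto. Qed.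

Lemma sat_h_sat_t f : forall H T, subset H T -> sat_h H T f -> sat_t T f.
Proof.
  induction f; intros H T hs; simpl; try tauto.
  - apply hs.
  - intros [x y]; split; eauto.
  - intros [x|y]; eauto.
Qed.

Lemma sat_h_diag f : forall T, sat_h T T f <-> sat_t T f.
Proof. induction f; intros T; simpl; rewrite ?IHf1, ?IHf2; tauto. Qed.

Lemma models_iff_sat_h f H T : subset H T -> (models H T f <-> sat_h H T f).
Proof. intros hs; unfold models; split; [tauto|]; intros h; split; eauto using sat_h_sat_t. Qed.

Lemma models_there f H T : models H T f -> models T T f.
Proof. intros [_ ht]; split; [apply sat_h_diag|]; exact ht. Qed.

Lemma eq_model_ext V a T1 T2 :
  (forall p, T1 p <-> T2 p) -> eq_model V a T1 -> eq_model V a T2.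
Proof.
  intros e [hV [hm hmin]].
  assert (hag : forall l, agree T1 T2 l) by (intros l p _; apply e).
  split; [intros p hp; apply hV, e, hp|]. split.
  - exact (models_agree _ _ _ _ _ (hag _) (hag _) hm).
  - intros [H [hs [[p [p1 p2]] hHm]]]; apply hmin.
    exists H; split; [intros q hq; apply e, hs, hq|]. split.
    + exists p; split; [apply e|]; assumption.
    + apply (models_agree _ H T2); [intros q _; reflexivity|apply agree_sym, hag|exact hHm].
Qed.


Definition conjL (l : list form) : form := fold_right And Top l.
Definition disjL (l : list form) : form := fold_right Or Bot l.

Lemma sat_conjL H T l : sat_h H T (conjL l) <-> forall f, In f l -> sat_h H T f.
Proof.
  induction l as [|f l IH]; simpl.
  - split; [tauto|]; intros; split; tauto.
  - rewrite IH; split.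
    + intros [x y] g [<-|hg]; auto.
    + intros h; split; auto.
Qed.

Lemma sat_disjL H T l : sat_h H T (disjL l) <-> exists f, In f l /\ sat_h H T f.
Proof.
  induction l as [|f l IH]; simpl.
  - split; [tauto|]; intros [g [[] _]].
  - rewrite IH; split.
    + intros [x|[g [h1 h2]]]; eauto.
    + intros [g [[<-|h1] h2]]; eauto.
Qed.

Lemma vars_conjL l p : In p (vars (conjL l)) -> exists f, In f l /\ In p (vars f).
Proof.
  induction l as [|f l IH]; simpl; [tauto|].
  intros [h|h]%in_app_or; [eauto|]. destruct (IH h) as [g [? ?]]; eauto.
Qed.

Lemma vars_disjL l p : In p (vars (disjL l)) -> exists f, In f l /\ In p (vars f).
Proof.
  induction l as [|f l IH]; simpl; [tauto|].
  intros [h|h]%in_app_or; [eauto|]. destruct (IH h) as [g [? ?]]; eauto.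
Qed.

Fixpoint sublists (l : list nat) : list (list nat) :=
  match l with
  | [] => [[]]
  | x :: l' => map (cons x) (sublists l') ++ sublists l'
  end.

Lemma sublists_incl l s : In s (sublists l) -> incl s l.
Proof.
  revert s; induction l as [|x l IH]; simpl; intros s hs.
  - destruct hs as [<-|[]]; apply incl_refl.
  - apply in_app_or in hs as [hs|hs].
    + apply in_map_iff in hs as [s' [<- hs']]. apply incl_cons; [now left|].
      apply incl_tl, IH, hs'.
    + apply incl_tl, IH, hs.
Qed.

Lemma sublists_represent (P : nat -> Prop) l :
  exists s, In s (sublists l) /\ forall p, In p l -> (In p s <-> P p).
Proof.
  induction l as [|x l [s [hs hP]]]; simpl.
  - exists []; split; [auto|tauto].
  - destruct (classic (P x)) as [hx|hx].
    + exists (x :: s); split; [apply in_or_app; left; apply in_map, hs|].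
      intros p [<-|hp]; simpl; [tauto|].
      destruct (Nat.eq_dec x p) as [<-|ne]; [tauto|]. rewrite <- hP by exact hp. intuition.
    + exists s; split; [apply in_or_app; right; exact hs|].
      intros p [<-|hp]; [|auto]. split; [|tauto].
      intros hxs; apply (hP x); [apply (sublists_incl l s)|]; assumption.
Qed.

Lemma filter_Prop {A} (Q : A -> Prop) (l : list A) :
  exists l', forall x, In x l' <-> In x l /\ Q x.
Proof.
  induction l as [|y l [l' IH]]; [exists []; simpl; tauto|].
  destruct (classic (Q y)).
  - exists (y :: l'); intros x; simpl; rewrite IH; intuition congruence.
  - exists l'; intros x; simpl; rewrite IH; intuition congruence.
Qed.

Notation in_dec_nat := (in_dec Nat.eq_dec).

Definition char_literal (h t : list nat) (p : nat) : form :=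
  if in_dec_nat p h then (if in_dec_nat p t then Atom p else Neg (Atom p))
  else (if in_dec_nat p t then Neg (Neg (Atom p)) else Neg (Atom p)).

Definition char_implication (h t : list nat) (pq : nat * nat) : form :=
  let (p, q) := pq in
  if in_dec_nat p h then Top else if in_dec_nat p t then
    (if in_dec_nat q h then Top else if in_dec_nat q t then Imp (Atom p) (Atom q) else Top)
  else Top.

(* The HT-models of [char_form X h t] are the ⟨H,T⟩ with T ∩ X = t and
   H ∩ X ∈ {h ∩ t, t}: the double negations leave the atoms of t \ h free at the
   here-world, and the implications between them make them hold all or none. *)
Definition char_form (X h t : list nat) : form :=
  And (conjL (map (char_literal h t) X)) (conjL (map (char_implication h t) (list_prod X X))).

Lemma vars_char_form X h t p : In p (vars (char_form X h t)) -> In p X.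
Proof.
  simpl; intros [hp|hp]%in_app_or; apply vars_conjL in hp as [f [hf hpf]];
    apply in_map_iff in hf as [x [<- hx]].
  - unfold char_literal in hpf; destruct (in_dec_nat x h), (in_dec_nat x t);
      simpl in hpf; intuition congruence.
  - destruct x as [u v]; apply in_prod_iff in hx; unfold char_implication in hpf.
    destruct (in_dec_nat u h), (in_dec_nat u t), (in_dec_nat v h), (in_dec_nat v t);
      simpl in hpf; intuition congruence.
Qed.

Lemma sat_char_form X h t H T : subset H T ->
  sat_h H T (char_form X h t) <->
  agree T (fun p => In p t) X /\
  (agree H (fun p => In p h /\ In p t) X \/ agree H (fun p => In p t) X).
Proof.
  intros hs; simpl; rewrite !sat_conjL; split.
  - intros [hlit himp].
    assert (hlit' : forall p, In p X -> sat_h H T (char_literal h t p))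
      by (intros p hp; apply hlit, in_map, hp).
    assert (hT : agree T (fun p => In p t) X).
    { intros p hp; specialize (hlit' p hp); unfold char_literal in hlit'.
      destruct (in_dec_nat p h), (in_dec_nat p t); simpl in hlit'; split; intros;
        try tauto; first [apply hs; tauto | apply NNPP; tauto]. }
    assert (hht : forall p, In p X -> In p h -> In p t -> H p).
    { intros p hp i1 i2; specialize (hlit' p hp); unfold char_literal in hlit'.
      destruct (in_dec_nat p h), (in_dec_nat p t); simpl in hlit'; tauto. }
    assert (hgap : forall p q, In p X -> In q X -> ~ In p h -> In p t ->
                     ~ In q h -> In q t -> H p -> H q).
    { intros p q hp hq a1 a2 a3 a4.
      specialize (himp (char_implication h t (p, q))
                    (in_map _ _ _ (proj2 (in_prod_iff _ _ _ _) (conj hp hq)))).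
      unfold char_implication in himp.
      destruct (in_dec_nat p h), (in_dec_nat p t), (in_dec_nat q h), (in_dec_nat q t);
        simpl in himp; tauto. }
    split; [exact hT|].
    destruct (classic (exists p, In p X /\ ~ In p h /\ In p t /\ H p))
      as [[p [hp [a1 [a2 a3]]]]|hn].
    + right; intros q hq; split; [intros hH; apply hT, hs; assumption|].
      intros hqt; destruct (in_dec_nat q h); eauto.
    + left; intros q hq; split; [|intros [i1 i2]; eauto].
      intros hH; assert (In q t) by (apply hT, hs; assumption).
      destruct (in_dec_nat q h); [tauto|]. exfalso; apply hn; eauto 6.
  - intros [hT hH]; split.
    + intros f hf; apply in_map_iff in hf as [q [<- hq]].
      specialize (hT q hq); specialize (hs q).
      destruct hH as [hH|hH]; specialize (hH q hq);
        unfold char_literal; destruct (in_dec_nat q h), (in_dec_nat q t); simpl; tauto.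
    + intros f hf; apply in_map_iff in hf as [[p q] [<- hpq]].
      apply in_prod_iff in hpq as [hp hq].
      pose proof (hT p hp); pose proof (hT q hq).
      destruct hH as [hH|hH]; pose proof (hH p hp); pose proof (hH q hq);
        unfold char_implication;
        destruct (in_dec_nat p h), (in_dec_nat p t), (in_dec_nat q h), (in_dec_nat q t);
        simpl; tauto.
Qed.

Lemma definable_on (X : list nat) (S : atoms -> atoms -> Prop) :
  (forall H T H' T', agree H H' X -> agree T T' X -> S H T -> S H' T') ->
  (forall H T, subset H T -> S H T -> S T T) ->
  exists g, (forall p, In p (vars g) -> In p X) /\
    forall H T, subset H T -> (models H T g <-> S H T).
Proof.
  intros S_agree S_there.
  set (Q := fun ht : list nat * list nat =>
              S (fun p => In p (fst ht) /\ In p (snd ht)) (fun p => In p (snd ht))).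
  destruct (filter_Prop Q (list_prod (sublists X) (sublists X))) as [l hl].
  exists (disjL (map (fun ht => char_form X (fst ht) (snd ht)) l)). split.
  { intros p hp; apply vars_disjL in hp as [f [hf hp]].
    apply in_map_iff in hf as [x [<- _]]; eapply vars_char_form; eauto. }
  intros H T hs; rewrite models_iff_sat_h, sat_disjL by exact hs; split.
  - intros [f [hf hsat]]; apply in_map_iff in hf as [[h t] [<- [_ hQ]%hl]].
    unfold Q in hQ; simpl in hQ.
    apply sat_char_form in hsat as [hT [hH|hH]]; [| |exact hs];
      apply (S_agree _ _ _ _ (agree_sym _ _ _ hH) (agree_sym _ _ _ hT)); [exact hQ|].
    apply (S_there (fun p => In p h /\ In p t)); [intros q; tauto|exact hQ].
  - intros hS.
    destruct (sublists_represent H X) as [h [hh hhX]].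
    destruct (sublists_represent T X) as [t [ht htX]].
    assert (hT : agree T (fun p => In p t) X) by (intros q hq; symmetry; apply htX, hq).
    assert (hH : agree H (fun p => In p h /\ In p t) X).
    { intros q hq; rewrite (hhX q hq), (htX q hq); split; [|tauto].
      intros x; split; auto. }
    exists (char_form X h t); split.
    + apply in_map_iff; exists (h, t); split; [reflexivity|].
      apply hl; split; [apply in_prod; assumption|].
      exact (S_agree _ _ _ _ hH hT hS).
    + apply sat_char_form; auto.
Qed.


Definition shared (a b : form) : list nat :=
  filter (fun p => if in_dec_nat p (vars a) then true else false) (vars b).

Lemma in_shared a b p : In p (shared a b) <-> In p (vars a) /\ In p (vars b).
Proof. unfold shared; rewrite filter_In; destruct (in_dec_nat p (vars a)); intuition congruence. Qed.

Definition glue (V W : list nat) (A B : atoms) : atoms :=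
  fun p => if in_dec_nat p V then A p else if in_dec_nat p W then B p else False.

Lemma glue_agree_l V W A B : agree (glue V W A B) A V.
Proof. intros p hp; unfold glue; destruct (in_dec_nat p V); tauto. Qed.

Lemma glue_agree_r V W A B :
  (forall p, In p V -> In p W -> (A p <-> B p)) -> agree (glue V W A B) B W.
Proof.
  intros hAB p hp; unfold glue; destruct (in_dec_nat p V); [apply hAB; assumption|].
  destruct (in_dec_nat p W); tauto.
Qed.

Lemma glue_subset V W A B C D :
  subset A C -> subset B D -> subset (glue V W A B) (glue V W C D).
Proof. intros h1 h2 p; unfold glue; destruct (in_dec_nat p V), (in_dec_nat p W); auto. Qed.

Lemma glue_bound V W A B : subset (glue V W A B) (fun p => In p V \/ In p W).
Proof. intros p; unfold glue; destruct (in_dec_nat p V), (in_dec_nat p W); tauto. Qed.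

Definition forces_on (X : list nat) (b : form) (H T : atoms) : Prop :=
  forall H' T', subset H' T' -> agree H H' X -> agree T T' X -> models H' T' b.

Lemma forces_on_agree X b H1 T1 H2 T2 :
  agree H1 H2 X -> agree T1 T2 X -> forces_on X b H1 T1 -> forces_on X b H2 T2.
Proof.
  intros hH hT hf H' T' hs h1 h2.
  apply hf; [exact hs|apply (agree_trans _ H2)|apply (agree_trans _ T2)]; assumption.
Qed.

Lemma glue_models_r a b H T H' T' :
  agree H H' (shared a b) -> agree T T' (shared a b) ->
  models (glue (vars a) (vars b) H H') (glue (vars a) (vars b) T T') b ->
  models H' T' b.
Proof.
  intros hH hT; apply models_agree; apply glue_agree_r;
    intros p pa pb; [apply hH|apply hT]; apply in_shared; auto.
Qed.

Lemma entails_forces_on a b H T :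
  entails a b -> subset H T -> models H T a -> forces_on (shared a b) b H T.
Proof.
  intros hab hs ha H' T' hs' hH hT; apply (glue_models_r a b H T); [assumption..|].
  apply hab; [apply glue_subset; assumption|].
  revert ha; apply models_agree; apply agree_sym, glue_agree_l.
Qed.

Lemma ow_entails_forces_on a b T :
  ow_entails a b -> eq_model (vars a) a (fun p => T p /\ In p (vars a)) ->
  forces_on (shared a b) b T T.
Proof.
  intros [hab _] heq H' T' hs' hH hT; apply (glue_models_r a b T T); [assumption..|].
  set (Tg := glue (vars a) (vars b) T T').
  assert (hTg : agree Tg T (vars a)) by apply glue_agree_l.
  apply hab.
  - exists (fun p => T p /\ In p (vars a)); exact heq.
  - apply glue_subset; [intros q; auto|exact hs'].
  - apply glue_bound.
  - intros p hp; rewrite (hTg p hp); apply glue_agree_l, hp.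
  - revert heq; apply eq_model_ext; intros p.
    split; intros [hp ha]; split; try apply hTg; assumption.
Qed.

Theorem proposition5 (a b : form) :
  ow_entails a b ->
  exists g : form,
    (forall p, In p (vars g) -> In p (vars a) /\ In p (vars b)) /\
    ow_entails a g /\ entails g b.
Proof.
  intros hab; set (X := shared a b).
  destruct (definable_on X (fun H T => forces_on X b H T /\ forces_on X b T T))
    as [g [hg_vars hg_models]].
  { intros H T H' T' hH hT [hHT hTT]; split; eapply forces_on_agree; eassumption. }
  { intros H T _ [_ hTT]; split; exact hTT. }
  exists g; split; [intros p hp; apply in_shared, hg_vars, hp|]. split; [split|].
  - intros _ H T hs _ hHT heq; apply hg_models; [exact hs|].
    pose proof (ow_entails_forces_on a b T hab heq) as hTT.
    split; [|exact hTT].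
    apply (forces_on_agree X b T T); [|intros p _; reflexivity|exact hTT].
    intros p hp; symmetry; apply hHT, (in_shared a b), hp.
  - intros hno H T hs ha; pose proof (proj2 hab hno) as hab'.
    apply hg_models; [exact hs|].
    split; apply entails_forces_on; eauto using models_there; intros q; auto.
  - intros H T hs hg; apply hg_models in hg as [hf _]; [|exact hs].
    apply hf; [exact hs|intros p _; reflexivity..].
Qed.
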